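(* Let $d$ be an even positive integer with $d\notin\{2,4,8\}$. For $x\in\mathbb{R}$ let ${\bm p}_x\in\mathbb{R}^d$ be defined by $({\bm p}_x)_{2i}=\sin(\omega_i x)$, $({\bm p}_x)_{2i+1}=\cos(\omega_i x)$ for $i=0,\dots,\tfrac d2-1$, with $\omega_i=10000^{-2i/d}$. Then the map $\mathbb{N}_{>0}\to\mathbb{R}^d$, $a\mapsto{\bm p}_a$, is injective; consequently the map $\mathbb{N}_{>0}^2\to\mathbb{R}^{2d}$, $(a,b)\mapsto[{\bm p}_a\,\|\,{\bm p}_b]$, is injective.
   Context: $[{\bm u}\,\|\,{\bm v}]$ denotes concatenation of vectors. $\mathbb{N}_{>0}$ denotes the positive integers. *)

From HB Require Import structures.
From mathcomp Require Import all_boot all_order all_algebra.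
From mathcomp Require Import all_classical all_reals all_analysis.
Set Implicit Arguments. Unset Strict Implicit. Unset Printing Implicit Defensive.
Import Order.TTheory GRing.Theory Num.Theory.
Local Open Scope ring_scope.

Definition omega (R : realType) (d i : nat) : R :=
  (10000%:R : R) `^ (- ((2 * i)%:R / d%:R)).

Definition posenc (R : realType) (d : nat) (x : R) : 'rV[R]_d :=
  \row_(j < d) (if odd j then cos (omega R d j./2 * x)
                else sin (omega R d j./2 * x)).

From HB Require Import structures.
From mathcomp Require Import all_boot all_order all_algebra.
From mathcomp Require Import all_classical all_reals all_analysis.
From mathcomp Require Import ring lra.
Import Order.TTheory GRing.Theory Num.Theory.
Local Open Scope ring_scope.

(* The lowest frequency is omega_0 = 1, so the first two coordinates of p_a are
   sin a and cos a.  If they agree for integers a and b, then cos (a - b) = 1,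
   so a - b is an integer multiple of 2 pi; as pi is irrational, a = b. *)

Section cos_periodicity.
Variable R : realType.

Lemma cosDz2pi (x : R) (k : int) : cos (x + k%:~R * (pi *+ 2)) = cos x.
Proof.
case: k => n; first by rewrite mulr_natl (periodicn (@cosD2pi R)).
rewrite NegzE mulNr -[in RHS](subrK (n.+1%:R * (pi *+ 2)) x).
by rewrite mulr_natl (periodicn (@cosD2pi R)).
Qed.

Lemma cos_eq1 (x : R) : cos x = 1 -> exists k : int, x = k%:~R * (pi *+ 2).
Proof.
move=> cx1; have pi2_gt0 : 0 < pi *+ 2 :> R by rewrite mulrn_wgt0 // pi_gt0.
(* Reduce x modulo 2 pi into [-pi, pi), where cos is injective on |x|. *)
pose k := Num.floor ((x + pi) / (pi *+ 2)); exists k.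
have /andP[kle ltk] := floor_itv ((x + pi) / (pi *+ 2)).
pose r := x - k%:~R * (pi *+ 2).
have r_itv : `|r| \in `[0, pi].
  rewrite in_itv /= normr_ge0 ler_norml; move: kle ltk.
  rewrite ler_pdivlMr // ltr_pdivrMr // -/k rmorphD /= mulrDl mul1r /r.
  by rewrite mulr2n; lra.
have cr1 : cos `|r| = cos 0 by rewrite cos_norm cos0 -cx1 -(cosDz2pi r k) subrK.
have /eqP : `|r| = 0 by apply: cos_inj; rewrite // in_itv /= lexx pi_ge0.
by rewrite normr_eq0 subr_eq0 => /eqP.
Qed.

Lemma intr_eq_mulz2pi (m k : int) : m%:~R = k%:~R * (pi *+ 2) :> R -> m = 0.
Proof.
have [-> /eqP|k_neq0 mE] := eqVneq k 0; first by rewrite mul0r intr_eq0 => /eqP.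
exfalso; apply: (@pi_irrationnal R); exists (m%:~R / (k * 2)%:~R) => //.
have kR_neq0 : k%:~R != 0 :> R by rewrite intr_eq0.
by rewrite fmorph_div /= !ratr_int mE intrM -mulr_natr; field.
Qed.

Lemma sin_cos_intr_inj (m n : int) :
  sin m%:~R = sin n%:~R :> R -> cos m%:~R = cos n%:~R :> R -> m = n.
Proof.
move=> msn mcn; apply/eqP; rewrite -subr_eq0; apply/eqP.
have /cos_eq1[k] : cos (m%:~R - n%:~R) = 1 :> R.
  by rewrite cosB -msn -mcn -!expr2 cos2Dsin2.
by rewrite -intrB => /intr_eq_mulz2pi.
Qed.

End cos_periodicity.

Lemma omega_0 (R : realType) (d : nat) : omega R d 0 = 1.
Proof. by rewrite /omega muln0 mul0r oppr0 powRr0. Qed.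

Section posenc_first_frequency.
Variables (R : realType) (d : nat).
Hypothesis d_gt1 : (1 < d)%N.

Lemma posenc_sin_cos (x y : R) :
  posenc d x = posenc d y -> sin x = sin y /\ cos x = cos y.
Proof.
move=> xy; have d_gt0 := ltnW d_gt1.
have := congr1 (fun v : 'rV_d => v 0 (Ordinal d_gt0)) xy.
have := congr1 (fun v : 'rV_d => v 0 (Ordinal d_gt1)) xy.
by rewrite !mxE /= omega_0 !mul1r.
Qed.

Lemma posenc_nat_inj : injective (fun a : nat => posenc d (a%:R : R)).
Proof.
move=> a b /posenc_sin_cos[sab cab].
by apply/eqP; rewrite -eqz_nat; apply/eqP/(@sin_cos_intr_inj R).
Qed.

End posenc_first_frequency.

Theorem mainTheorem2 (R : realType) (d : nat) :
  (0 < d)%N -> ~~ odd d -> d \notin [:: 2; 4; 8]%N ->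
  (forall a b : nat, (0 < a)%N -> (0 < b)%N ->
     posenc d (a%:R : R) = posenc d (b%:R : R) -> a = b) /\
  (forall a b a' b' : nat, (0 < a)%N -> (0 < b)%N -> (0 < a')%N -> (0 < b')%N ->
     row_mx (posenc d (a%:R : R)) (posenc d (b%:R : R))
       = row_mx (posenc d (a'%:R : R)) (posenc d (b'%:R : R)) ->
     (a, b) = (a', b')).
Proof.
move=> d_gt0 d_even _.
have d_gt1 : (1 < d)%N by case: d d_gt0 d_even => [|[|]].
have p_inj := @posenc_nat_inj R d d_gt1.
split=> [a b _ _ /p_inj //|a b a' b' _ _ _ _ /eq_row_mx[/p_inj-> /p_inj->] //].
Qed.
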